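(* Let $\mathcal R$ be a commutative ring and $\mathcal A$ an associative $\mathcal R$-algebra (not necessarily with identity) together with pairwise orthogonal idempotents $e_i$ ($i\in I$) such that $\mathcal A=\bigoplus_{i,i'\in I}e_i\mathcal Ae_{i'}$ and each $e_i\mathcal Ae_{i'}$ is a free $\mathcal R$-module. Let $\mathcal B=\{a_j\}_{j\in J}$ be an $\mathcal R$-basis of $\mathcal A$ such that, for all $i,i'$, the nonzero elements among $\{e_ia_je_{i'}\}_{j\in J}$ form a basis of $e_i\mathcal Ae_{i'}$, $\mathcal B=\bigcup_{i,i'}e_i\mathcal Be_{i'}$, and every $e_i$ lies in $\mathcal B$; for $j\in J$ let $ro(j),co(j)\in I$ be the unique indices with $e_{ro(j)}a_j=a_j$ and $a_je_{co(j)}=a_j$. Let $\mathfrak L$ be the set of formal (possibly infinite) linear combinations $f=\sum_{j\in J}f_ja_j$, $f_j\in\mathcal R$, and for $i\in I$ set $J(e_i,f)=\{j:f_j\ne0,\ ro(j)=i\}$, $J(f,e_i)=\{j:f_j\ne0,\ co(j)=i\}$. Define $${}^\dagger\widehat{\mathcal A}=\{f\in\mathfrak L:|J(e_i,f)|<\infty\ \forall i\},\quad \widehat{\mathcal A}^\dagger=\{f\in\mathfrak L:|J(f,e_i)|<\infty\ \forall i\},\quad \widehat{\mathcal A}={}^\dagger\widehat{\mathcal A}\cap\widehat{\mathcal A}^\dagger,$$ with product $\bigl(\sum_sf_sa_s\bigr)\bigl(\sum_tg_ta_t\bigr)=\sum_{s,t}f_sg_t\,a_sa_t$ (products $a_sa_t$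 computed in $\mathcal A$). Then this product is well defined on ${}^\dagger\widehat{\mathcal A}$ and on $\widehat{\mathcal A}^\dagger$, making each of them an associative $\mathcal R$-algebra with identity $1=\sum_{i\in I}e_i$, and $\widehat{\mathcal A}$ is a subalgebra with the same identity. *)

From HB Require Import structures.
From mathcomp Require Import all_boot all_algebra.
From Stdlib Require Import ClassicalEpsilon.

Set Implicit Arguments.
Unset Strict Implicit.
Unset Printing Implicit Defensive.

Import GRing.Theory.
Local Open Scope ring_scope.

Section Defs.
Variable R : comPzRingType.

Definition fin_supp (T : eqType) (F : T -> R) : Prop :=
  exists s : seq T, forall x, F x != 0 -> x \in s.

(* sum of a finitely supported family (junk value if the support is infinite) *)
Definition fsum (T : eqType) (F : T -> R) : R :=
  \sum_(x <- undup (epsilon (inhabits (@nil T))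
                     (fun s : seq T => forall x, F x != 0 -> x \in s))) F x.

Variable A : lmodType R.

Definition nu_algebra (mul : A -> A -> A) : Prop :=
  [/\ forall x y z, mul x (mul y z) = mul (mul x y) z,
      forall (r : R) x y z, mul (r *: x + y) z = r *: mul x z + mul y z &
      forall (r : R) x y z, mul z (r *: x + y) = r *: mul z x + mul z y].

Definition represents (J : eqType) (P : J -> Prop) (b : J -> A) (c : J -> R)
  (x : A) : Prop :=
  exists s : seq J,
    [/\ uniq s, forall j, j \in s -> P j, forall j, c j != 0 -> j \in s &
        x = \sum_(j <- s) c j *: b j].

Definition basis_on (J : eqType) (P : J -> Prop) (b : J -> A) (S : A -> Prop)
  : Prop :=
  [/\ forall j, P j -> S (b j),
      forall x, S x -> exists c, represents P b c x &
      forall x c1 c2, represents P b c1 x -> represents P b c2 x -> c1 = c2].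

Definition is_basis (J : eqType) (b : J -> A) : Prop :=
  basis_on (fun _ => True) b (fun _ => True).

Definition free_mod (S : A -> Prop) : Prop :=
  exists (K : eqType) (b : K -> A), basis_on (fun _ => True) b S.

Definition coord (J : eqType) (b : J -> A) (x : A) : J -> R :=
  epsilon (inhabits (fun _ : J => 0))
          (fun c => represents (fun _ => True) b c x).

Definition block (I : Type) (mul : A -> A -> A) (e : I -> A) (i i' : I)
  (x : A) : Prop :=
  exists z, x = mul (mul (e i) z) (e i').

Definition orth_idem (I : eqType) (mul : A -> A -> A) (e : I -> A) : Prop :=
  forall i i', mul (e i) (e i') = if i == i' then e i else 0.

Definition block_decomp (I : eqType) (mul : A -> A -> A) (e : I -> A) : Prop :=
  (forall x, exists (s : seq (I * I)) (y : I * I -> A),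
      [/\ uniq s, forall p, p \in s -> block mul e p.1 p.2 (y p) &
          x = \sum_(p <- s) y p]) /\
  (forall (s : seq (I * I)) (y : I * I -> A), uniq s ->
      (forall p, p \in s -> block mul e p.1 p.2 (y p)) ->
      \sum_(p <- s) y p = 0 -> forall p, p \in s -> y p = 0).

(* formal series f = sum_j f_j a_j are functions J -> R *)

Definition fmul_terms (J : eqType) (mul : A -> A -> A) (a : J -> A)
  (f g : J -> R) (k : J) : J * J -> R :=
  fun p => f p.1 * g p.2 * coord a (mul (a p.1) (a p.2)) k.

Definition fmul (J : eqType) (mul : A -> A -> A) (a : J -> A)
  (f g : J -> R) : J -> R :=
  fun k => fsum (fmul_terms mul a f g k).

Definition funit (I J : eqType) (a : J -> A) (e : I -> A) : J -> R :=
  fun j => fsum (fun i : I => coord a (e i) j).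

Definition ldag (I J : eqType) (ro : J -> I) (f : J -> R) : Prop :=
  forall i, exists s : seq J, forall j, f j != 0 -> ro j = i -> j \in s.

Definition rdag (I J : eqType) (co : J -> I) (f : J -> R) : Prop :=
  forall i, exists s : seq J, forall j, f j != 0 -> co j = i -> j \in s.

Definition fmul_welldef (J : eqType) (mul : A -> A -> A) (a : J -> A)
  (P : (J -> R) -> Prop) : Prop :=
  forall f g, P f -> P g ->
    (forall k, fin_supp (fmul_terms mul a f g k)) /\ P (fmul mul a f g).

Definition assoc_unital_alg (J : Type) (P : (J -> R) -> Prop)
  (m : (J -> R) -> (J -> R) -> (J -> R)) (u : J -> R) : Prop :=
  P (fun _ => 0) /\
  (forall r f g, P f -> P g -> P (fun j => r * f j + g j)) /\
  (forall f g, P f -> P g -> P (m f g)) /\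
  (forall f g h, P f -> P g -> P h -> m f (m g h) = m (m f g) h) /\
  (forall r f g h, P f -> P g -> P h ->
     m (fun j => r * f j + g j) h = (fun j => r * m f h j + m g h j)) /\
  (forall r f g h, P f -> P g -> P h ->
     m h (fun j => r * f j + g j) = (fun j => r * m h f j + m h g j)) /\
  P u /\
  (forall f, P f -> m u f = f /\ m f u = f).

End Defs.

From Pilot Require Import Defs.
From HB Require Import structures.
From mathcomp Require Import all_boot all_algebra ring.
From Stdlib Require Import ClassicalEpsilon FunctionalExtensionality Classical.

Set Implicit Arguments.
Unset Strict Implicit.
Unset Printing Implicit Defensive.

Import GRing.Theory.
Local Open Scope ring_scope.

(* Let sc s t k be the coordinate of a_s a_t on a_k. Since e_i a_j is a_j or 0
   according as ro j = i (and symmetrically for co), sc s t k <> 0 forces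
   ro k = ro s, ro t = co s and co k = co t. Hence for row-finite f and g the
   coefficient of a_k in f g only involves the finitely many s in row ro k with
   f_s <> 0 and, for each of them, the finitely many t in row co s with
   g_t <> 0: all sums are finite and f g is again row-finite. Associativity
   reduces to sum_m sc s t m sc m u k = sum_m sc t u m sc s m k, which is
   associativity in A read off in the basis, and 1 = sum_i e_i is an identity
   because e_i a_j = [ro j = i] a_j. The column-finite case is the row-finite
   case of the opposite algebra. *)

Lemma eq_big_supp (V : nmodType) (T : eqType) (F : T -> V) (L1 L2 : seq T) :
  uniq L1 -> uniq L2 ->
  (forall x, F x != 0 -> x \in L1) -> (forall x, F x != 0 -> x \in L2) ->
  \sum_(x <- L1) F x = \sum_(x <- L2) F x.
Proof.
move=> uL1 uL2 cL1 cL2.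
have supp_filter L : \sum_(x <- L) F x = \sum_(x <- [seq x <- L | F x != 0]) F x.
  rewrite big_filter [RHS]big_mkcond; apply: eq_bigr => x _.
  by case: (F x =P 0) => [->|].
rewrite supp_filter [RHS]supp_filter.
apply/perm_big/uniq_perm; rewrite ?filter_uniq //.
move=> x; rewrite !mem_filter; case Fx: (F x != 0) => //=.
by rewrite (cL1 _ Fx) (cL2 _ Fx).
Qed.

Lemma cover_seq_union (T U : eqType) (L : seq T) (Q : T -> U -> Prop) :
  (forall x, x \in L -> exists s : seq U, forall y, Q x y -> y \in s) ->
  exists s : seq U, forall x y, x \in L -> Q x y -> y \in s.
Proof.
elim: L => [|x L IH] cover; first by exists [::].
have [s1 H1] := cover x (mem_head _ _).
have [s2 H2] : exists s : seq U, forall x y, x \in L -> Q x y -> y \in s.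
  by apply: IH => x' Lx'; apply: cover; rewrite in_cons Lx' orbT.
exists (s1 ++ s2) => x' y; rewrite in_cons mem_cat => /orP [/eqP -> Qy|Lx' Qy].
  by rewrite H1.
by rewrite (H2 x') ?orbT.
Qed.

Lemma ring_trivial (R : pzRingType) : 1 = 0 :> R -> forall x y : R, x = y.
Proof. by move=> R10 x y; rewrite -[x]mulr1 -[y]mulr1 R10 !mulr0. Qed.

Section FiniteSums.
Variable R : comPzRingType.

Lemma fsumE (T : eqType) (F : T -> R) (L : seq T) :
  (forall x, F x != 0 -> x \in L) -> fsum F = \sum_(x <- undup L) F x.
Proof.
move=> cL; rewrite /fsum.
set P := fun s : seq T => forall x, F x != 0 -> x \in s.
have cE : P (epsilon (inhabits (@nil T)) P) by apply: epsilon_spec; exists L.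
apply: eq_big_supp; rewrite ?undup_uniq // => x Fx; rewrite mem_undup.
  exact: cE.
exact: cL.
Qed.

Lemma fsum_neq0 (T : eqType) (F : T -> R) : fsum F != 0 -> exists x, F x != 0.
Proof.
move=> F_neq0; apply: NNPP => /not_ex_all_not F0; move: F_neq0.
by rewrite /fsum big1 ?eqxx // => x _; apply/eqP/negbNE/negP/F0.
Qed.

Lemma fsum_lin (T : eqType) (r : R) (F G : T -> R) :
  fin_supp F -> fin_supp G -> fsum (fun x => r * F x + G x) = r * fsum F + fsum G.
Proof.
move=> [s1 H1] [s2 H2]; rewrite !(@fsumE _ _ (s1 ++ s2)).
- by rewrite big_split /= mulr_sumr.
- by move=> x /H2; rewrite mem_cat orbC => ->.
- by move=> x /H1; rewrite mem_cat => ->.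
move=> x; rewrite mem_cat; case: (F x =P 0) => [->|/eqP /H1 -> //].
by rewrite mulr0 add0r => /H2 ->; rewrite orbT.
Qed.

Lemma fin_supp_swap (T U : eqType) (F : T * U -> R) :
  fin_supp F -> fin_supp (fun p : U * T => F (p.2, p.1)).
Proof.
move=> [s H]; exists [seq (p.2, p.1) | p <- s] => -[u t] /H st.
by apply/mapP; exists (t, u).
Qed.

Lemma fsum_swap (T U : eqType) (F : T * U -> R) :
  fin_supp F -> fsum (fun p : U * T => F (p.2, p.1)) = fsum F.
Proof.
move=> [s H]; rewrite (@fsumE _ _ s) // (@fsumE _ _ [seq (p.2, p.1) | p <- s]).
  rewrite undup_map_inj ?big_map; last by move=> [? ?] [? ?] [-> ->].
  by apply: eq_bigr => -[].
by move=> [u t] /H st; apply/mapP; exists (t, u).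
Qed.

End FiniteSums.

Lemma sum_reassoc (R : comPzRingType) (J : eqType) (f g h : J -> R)
    (C : J -> J -> J -> R) k (S1 S2 S3 M : seq J) :
  (forall s t u, s \in S1 -> t \in S2 -> u \in S3 ->
     \sum_(m <- M) C s t m * C m u k = \sum_(m <- M) C t u m * C s m k) ->
  \sum_(s <- S1) \sum_(m <- M)
     f s * (\sum_(t <- S2) \sum_(u <- S3) g t * h u * C t u m) * C s m k =
  \sum_(m <- M) \sum_(u <- S3)
     (\sum_(s <- S1) \sum_(t <- S2) f s * g t * C s t m) * h u * C m u k.
Proof.
move=> C_assoc.
have -> : \sum_(s <- S1) \sum_(m <- M)
     f s * (\sum_(t <- S2) \sum_(u <- S3) g t * h u * C t u m) * C s m k =
  \sum_(s <- S1) \sum_(t <- S2) \sum_(u <- S3) (f s * g t * h u) *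
     \sum_(m <- M) C t u m * C s m k.
  apply: eq_bigr => s _.
  under eq_bigr => m _ do rewrite mulr_sumr mulr_suml.
  rewrite exchange_big; apply: eq_bigr => t _.
  under eq_bigr => m _ do rewrite mulr_sumr mulr_suml.
  rewrite exchange_big; apply: eq_bigr => u _.
  by rewrite mulr_sumr; apply: eq_bigr => m _; ring.
have -> : \sum_(m <- M) \sum_(u <- S3)
     (\sum_(s <- S1) \sum_(t <- S2) f s * g t * C s t m) * h u * C m u k =
  \sum_(s <- S1) \sum_(t <- S2) \sum_(u <- S3) (f s * g t * h u) *
     \sum_(m <- M) C s t m * C m u k.
  rewrite exchange_big.
  under eq_bigr => u _ do
    (under eq_bigr => m _ do rewrite !mulr_suml; rewrite exchange_big).
  rewrite exchange_big; apply: eq_bigr => s _.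
  under eq_bigr => u _ do
    (under eq_bigr => m _ do rewrite !mulr_suml; rewrite exchange_big).
  rewrite exchange_big; apply: eq_bigr => t _.
  apply: eq_bigr => u _; rewrite mulr_sumr; apply: eq_bigr => m _.
  by ring.
apply: eq_big_seq => s S1s; apply: eq_big_seq => t S2t; apply: eq_big_seq => u S3u.
by rewrite C_assoc.
Qed.

Section SeriesAlgebras.
Variables (R : comPzRingType) (J : Type).
Implicit Types (P Q : (J -> R) -> Prop) (m : (J -> R) -> (J -> R) -> J -> R).

Lemma assoc_unital_alg_meet P Q m u :
  assoc_unital_alg P m u -> assoc_unital_alg Q m u ->
  assoc_unital_alg (fun f => P f /\ Q f) m u.
Proof.
move=> [P0 [Plin [Pm [mA [mDl [mDr [Pu mu]]]]]]].
move=> [Q0 [Qlin [Qm [_ [_ [_ [Qu _]]]]]]].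
split; first by [].
split; first by move=> r f g [? ?] [? ?]; split; [apply: Plin | apply: Qlin].
split; first by move=> f g [? ?] [? ?]; split; [apply: Pm | apply: Qm].
split; first by move=> f g h [? ?] [? ?] [? ?]; apply: mA.
split; first by move=> r f g h [? ?] [? ?] [? ?]; apply: mDl.
split; first by move=> r f g h [? ?] [? ?] [? ?]; apply: mDr.
by split=> [//|f [? ?]]; apply: mu.
Qed.

Lemma assoc_unital_alg_op P m m' u :
  (forall f g, P f -> P g -> m f g = m' g f) ->
  assoc_unital_alg P m' u -> assoc_unital_alg P m u.
Proof.
move=> mE [P0 [Plin [Pm [mA [mDl [mDr [Pu mu]]]]]]].
have Pm' f g : P f -> P g -> P (m f g) by move=> Pf Pg; rewrite mE //; apply: Pm.
split; first by [].
split; first by [].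
split; first exact: Pm'.
split.
  move=> f g h Pf Pg Ph.
  rewrite (mE _ _ Pf (Pm' _ _ Pg Ph)) (mE _ _ Pg Ph).
  by rewrite (mE _ _ (Pm' _ _ Pf Pg) Ph) (mE _ _ Pf Pg) mA.
split.
  move=> r f g h Pf Pg Ph.
  by rewrite (mE _ _ (Plin r f g Pf Pg) Ph) (mE _ _ Pf Ph) (mE _ _ Pg Ph) mDr.
split.
  move=> r f g h Pf Pg Ph.
  by rewrite (mE _ _ Ph (Plin r f g Pf Pg)) (mE _ _ Ph Pf) (mE _ _ Ph Pg) mDl.
by split=> [//|f Pf]; rewrite (mE _ _ Pu Pf) (mE _ _ Pf Pu); have [] := mu f Pf.
Qed.

End SeriesAlgebras.

Section RowFiniteCompletion.
Variables (R : comPzRingType) (A : lmodType R) (mul : A -> A -> A)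
  (I J : eqType) (e : I -> A) (a : J -> A) (ro co : J -> I).
Hypothesis mul_alg : nu_algebra mul.
Hypothesis e_orth : orth_idem mul e.
Hypothesis a_basis : is_basis a.
Hypothesis e_in_basis : forall i, exists j, a j = e i.
Hypothesis ro_a : forall j, mul (e (ro j)) (a j) = a j.
Hypothesis co_a : forall j, mul (a j) (e (co j)) = a j.
Implicit Types (f g h : J -> R) (S T : seq J).

Local Notation rep := (represents (fun _ => True) a).
Local Notation acoord := (Defs.coord a).
Local Notation "f ** g" := (fmul mul a f g) (at level 40, left associativity).

Lemma amulA x y z : mul x (mul y z) = mul (mul x y) z.
Proof. by case: mul_alg. Qed.

Lemma amul0l z : mul 0 z = 0.
Proof.
case: mul_alg => _ linl _.
by have := linl (-1) 0 0 z; rewrite scaler0 addr0 scaleN1r addNr.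
Qed.

Lemma amul0r z : mul z 0 = 0.
Proof.
case: mul_alg => _ _ linr.
by have := linr (-1) 0 0 z; rewrite scaler0 addr0 scaleN1r addNr.
Qed.

Lemma amulZl r x z : mul (r *: x) z = r *: mul x z.
Proof. by case: mul_alg => _ linl _; rewrite -[r *: x]addr0 linl amul0l addr0. Qed.

Lemma amulZr r x z : mul z (r *: x) = r *: mul z x.
Proof. by case: mul_alg => _ _ linr; rewrite -[r *: x]addr0 linr amul0r addr0. Qed.

Lemma amul_suml (T : Type) (L : seq T) (F : T -> A) z :
  mul (\sum_(i <- L) F i) z = \sum_(i <- L) mul (F i) z.
Proof.
case: mul_alg => _ linl _; elim: L => [|x L IH]; first by rewrite !big_nil amul0l.
by rewrite !big_cons -IH; have := linl 1 (F x) (\sum_(i <- L) F i) z; rewrite !scale1r.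
Qed.

Lemma amul_sumr (T : Type) (L : seq T) (F : T -> A) z :
  mul z (\sum_(i <- L) F i) = \sum_(i <- L) mul z (F i).
Proof.
case: mul_alg => _ _ linr; elim: L => [|x L IH]; first by rewrite !big_nil amul0r.
by rewrite !big_cons -IH; have := linr 1 (F x) (\sum_(i <- L) F i) z; rewrite !scale1r.
Qed.

Lemma acoordP x : rep (acoord x) x.
Proof.
apply: (@epsilon_spec _ _ (fun c => rep c x)).
by case: a_basis => _ rep_ex _; apply: rep_ex.
Qed.

Lemma acoord_unique c x : rep c x -> acoord x = c.
Proof. by case: a_basis => _ _ rep_uniq; apply/rep_uniq/acoordP. Qed.

Lemma rep_sum c x L : rep c x -> uniq L -> (forall j, c j != 0 -> j \in L) ->
  x = \sum_(j <- L) c j *: a j.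
Proof.
move=> [s [us _ cs ->]] uL cL; apply: eq_big_supp => // j.
  by case: (c j =P 0) => [->|/eqP/cs//]; rewrite scale0r eqxx.
by case: (c j =P 0) => [->|/eqP/cL//]; rewrite scale0r eqxx.
Qed.

Lemma acoord_sum x L : uniq L -> (forall j, acoord x j != 0 -> j \in L) ->
  x = \sum_(j <- L) acoord x j *: a j.
Proof. exact: rep_sum (acoordP x). Qed.

Lemma acoord_supp x : exists s : seq J, forall j, acoord x j != 0 -> j \in s.
Proof. by have [s [_ _ cs _]] := acoordP x; exists s. Qed.

Lemma acoord_lin r x y :
  acoord (r *: x + y) = fun j => r * acoord x j + acoord y j.
Proof.
apply: acoord_unique.
have [sx [_ _ cx _]] := acoordP x; have [sy [_ _ cy _]] := acoordP y.
set L := undup (sx ++ sy).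
have Lx j : acoord x j != 0 -> j \in L by move/cx; rewrite mem_undup mem_cat => ->.
have Ly j : acoord y j != 0 -> j \in L.
  by move/cy; rewrite mem_undup mem_cat => ->; rewrite orbT.
exists L; split; rewrite ?undup_uniq //.
  move=> j; case: (acoord x j =P 0) => [->|/eqP/Lx//].
  by rewrite mulr0 add0r => /Ly.
rewrite {1}(acoord_sum (undup_uniq _) Lx) {1}(acoord_sum (undup_uniq _) Ly).
by rewrite scaler_sumr -big_split; apply: eq_bigr => k _; rewrite scalerA scalerDl.
Qed.

Lemma acoord0 : acoord 0 = fun _ => 0.
Proof.
by apply: acoord_unique; exists [::]; rewrite big_nil; split=> // j; rewrite eqxx.
Qed.

Lemma acoord_basis j0 : acoord (a j0) = fun j => (j == j0)%:R.
Proof.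
apply: acoord_unique; exists [:: j0]; split => //.
  by move=> j; case: (j =P j0) => [->|]; rewrite ?mem_head ?eqxx.
by rewrite big_seq1 eqxx scale1r.
Qed.

Lemma acoord_sumZ (T : Type) (L : seq T) (r : T -> R) (v : T -> A) k :
  acoord (\sum_(i <- L) r i *: v i) k = \sum_(i <- L) r i * acoord (v i) k.
Proof.
elim: L => [|x L IH]; first by rewrite !big_nil acoord0.
by rewrite !big_cons acoord_lin IH.
Qed.

Lemma e_mul_a i j : mul (e i) (a j) = if ro j == i then a j else 0.
Proof.
rewrite -{1}ro_a amulA e_orth [ro j == i]eq_sym.
by case: (i =P ro j) => [->|_]; rewrite ?ro_a ?amul0l.
Qed.

Lemma a_mul_e j i : mul (a j) (e i) = if co j == i then a j else 0.
Proof.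
rewrite -{1}co_a -amulA e_orth.
by case: (co j =P i) => [_|_]; rewrite ?co_a ?amul0r.
Qed.

Lemma acoord_emul i x k :
  acoord (mul (e i) x) k = if ro k == i then acoord x k else 0.
Proof.
have [s [us _ cs xs]] := acoordP x.
suff -> : acoord (mul (e i) x) = fun j => if ro j == i then acoord x j else 0 by [].
apply: acoord_unique; exists s; split => //.
  by move=> j; case: (ro j == i) => [/cs//|]; rewrite eqxx.
rewrite {1}xs amul_sumr; apply: eq_bigr => j _.
by rewrite amulZr e_mul_a; case: (ro j == i); rewrite ?scaler0 ?scale0r.
Qed.

Lemma acoord_mule i x k :
  acoord (mul x (e i)) k = if co k == i then acoord x k else 0.
Proof.
have [s [us _ cs xs]] := acoordP x.
suff -> : acoord (mul x (e i)) = fun j => if co j == i then acoord x j else 0 by [].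
apply: acoord_unique; exists s; split => //.
  by move=> j; case: (co j == i) => [/cs//|]; rewrite eqxx.
rewrite {1}xs amul_suml; apply: eq_bigr => j _.
by rewrite amulZl a_mul_e; case: (co j == i); rewrite ?scaler0 ?scale0r.
Qed.

Local Notation sc s t k := (acoord (mul (a s) (a t)) k).

Lemma sc_ro s t k : sc s t k != 0 -> ro k = ro s.
Proof.
have -> : mul (a s) (a t) = mul (e (ro s)) (mul (a s) (a t)) by rewrite amulA ro_a.
by rewrite acoord_emul; case: (ro k =P ro s) => [//|_]; rewrite eqxx.
Qed.

Lemma sc_co s t k : sc s t k != 0 -> co k = co t.
Proof.
have -> : mul (a s) (a t) = mul (mul (a s) (a t)) (e (co t)) by rewrite -amulA co_a.
by rewrite acoord_mule; case: (co k =P co t) => [//|_]; rewrite eqxx.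
Qed.

Lemma sc_mid s t k : sc s t k != 0 -> ro t = co s.
Proof.
have -> : mul (a s) (a t) = mul (a s) (mul (e (co s)) (a t)) by rewrite amulA co_a.
by rewrite e_mul_a; case: (ro t =P co s) => [//|_]; rewrite amul0r acoord0 eqxx.
Qed.

Lemma sc_assoc s t u k L : uniq L ->
  (forall m, sc s t m != 0 -> m \in L) -> (forall m, sc t u m != 0 -> m \in L) ->
  \sum_(m <- L) sc s t m * sc m u k = \sum_(m <- L) sc t u m * sc s m k.
Proof.
move=> uL Lst Ltu.
rewrite -[LHS]acoord_sumZ -[RHS]acoord_sumZ.
under eq_bigr do rewrite -amulZl.
under [in RHS]eq_bigr do rewrite -amulZr.
by rewrite -amul_suml -amul_sumr -acoord_sum // -acoord_sum // amulA.
Qed.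

Lemma fmul_terms_neq0 f g k p : fmul_terms mul a f g k p != 0 ->
  [/\ f p.1 != 0, g p.2 != 0 & sc p.1 p.2 k != 0].
Proof.
by rewrite /fmul_terms => Fp; split; apply: contraNneq Fp => ->;
  rewrite !(mul0r, mulr0).
Qed.

Lemma ldag_cover g S : ldag ro g ->
  exists T : seq J, forall s t, s \in S -> g t != 0 -> ro t = co s -> t \in T.
Proof.
move=> g_ldag.
have [T HT] := @cover_seq_union _ _ S (fun s t => g t != 0 /\ ro t = co s)
  (fun s _ => let: ex_intro T HT := g_ldag (co s) in
     ex_intro _ T (fun t (Ht : g t != 0 /\ ro t = co s) => HT t Ht.1 Ht.2)).
by exists T => s t Ss gt rt; apply: (HT s).
Qed.

Lemma fmulE f g k S T : uniq S -> uniq T ->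
  (forall s t, fmul_terms mul a f g k (s, t) != 0 -> s \in S /\ t \in T) ->
  (f ** g) k = \sum_(s <- S) \sum_(t <- T) f s * g t * sc s t k.
Proof.
move=> uS uT ST; rewrite /fmul (@fsumE _ _ _ [seq (s, t) | s <- S, t <- T]).
  by rewrite undup_id ?big_allpairs // allpairs_uniq // => -[? ?] [? ?].
by move=> [s t] /ST [Ss Tt]; apply: allpairs_f.
Qed.

Lemma fin_supp_fmul_terms f g k :
  ldag ro f -> ldag ro g -> fin_supp (fmul_terms mul a f g k).
Proof.
move=> f_ldag g_ldag; have [S HS] := f_ldag (ro k); have [T HT] := ldag_cover S g_ldag.
exists [seq (s, t) | s <- S, t <- T] => -[s t] /fmul_terms_neq0 [fs gt st] /=.
have Ss : s \in S by apply: HS => //; rewrite (sc_ro st).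
by apply: allpairs_f => //; apply: HT Ss gt (sc_mid st).
Qed.

Lemma ldag_fmul f g : ldag ro f -> ldag ro g -> ldag ro (f ** g).
Proof.
move=> f_ldag g_ldag i; have [S HS] := f_ldag i; have [T HT] := ldag_cover S g_ldag.
have [K HK] := @cover_seq_union _ _ [seq (s, t) | s <- S, t <- T]
  (fun p k => sc p.1 p.2 k != 0) (fun p _ => acoord_supp _).
exists K => k /fsum_neq0 [[s t] /fmul_terms_neq0 [fs gt st]] rk /=.
have Ss : s \in S by apply: HS => //; rewrite -(sc_ro st).
by apply: (HK (s, t)) => //; apply: allpairs_f => //; apply: HT Ss gt (sc_mid st).
Qed.

Lemma ldag0 : ldag ro (fun _ => 0 : R).
Proof. by move=> i; exists [::] => j; rewrite eqxx. Qed.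

Lemma ldag_lin r f g : ldag ro f -> ldag ro g -> ldag ro (fun j => r * f j + g j).
Proof.
move=> f_ldag g_ldag i; have [s1 H1] := f_ldag i; have [s2 H2] := g_ldag i.
exists (s1 ++ s2) => j; rewrite mem_cat; case: (f j =P 0) => [->|/eqP fj _ rj].
  by rewrite mulr0 add0r => gj rj; rewrite H2 ?orbT.
by rewrite H1.
Qed.

Lemma fmul_linl r f g h : ldag ro f -> ldag ro g -> ldag ro h ->
  (fun j => r * f j + g j) ** h = fun k => r * (f ** h) k + (g ** h) k.
Proof.
move=> f_ldag g_ldag h_ldag; apply: functional_extensionality => k.
rewrite /fmul -fsum_lin; try exact: fin_supp_fmul_terms.
congr fsum.
by apply: functional_extensionality => p; rewrite /fmul_terms /= !mulrDl !mulrA.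
Qed.

Lemma fmul_linr r f g h : ldag ro f -> ldag ro g -> ldag ro h ->
  h ** (fun j => r * f j + g j) = fun k => r * (h ** f) k + (h ** g) k.
Proof.
move=> f_ldag g_ldag h_ldag; apply: functional_extensionality => k.
rewrite /fmul -fsum_lin; try exact: fin_supp_fmul_terms.
congr fsum.
apply: functional_extensionality => p; rewrite /fmul_terms /=.
by rewrite mulrDr !mulrDl !mulrA [h p.1 * r]mulrC.
Qed.

Section Associativity.
Variables (f g h : J -> R) (k : J) (S1 S2 S3 M : seq J).
Hypotheses (S1_uniq : uniq S1) (S2_uniq : uniq S2) (S3_uniq : uniq S3)
  (M_uniq : uniq M).
Hypothesis S1_cover : forall s, f s != 0 -> ro s = ro k -> s \in S1.
Hypothesis S2_cover : forall s t, s \in S1 -> g t != 0 -> ro t = co s -> t \in S2.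
Hypothesis S3_cover : forall t u, t \in S2 -> h u != 0 -> ro u = co t -> u \in S3.
Hypothesis M_cover12 : forall s t m, s \in S1 -> t \in S2 -> sc s t m != 0 -> m \in M.
Hypothesis M_cover23 : forall t u m, t \in S2 -> u \in S3 -> sc t u m != 0 -> m \in M.

Lemma fmulA_expandl : (f ** (g ** h)) k = \sum_(s <- S1) \sum_(m <- M)
  f s * (\sum_(t <- S2) \sum_(u <- S3) g t * h u * sc t u m) * sc s m k.
Proof.
rewrite (@fmulE _ _ _ S1 M) //; last first.
  move=> s m /fmul_terms_neq0 [fs /fsum_neq0 [[t u] /fmul_terms_neq0 [gt hu tu]] sm] /=.
  have S1s := S1_cover fs (esym (sc_ro sm)).
  have S2t := S2_cover S1s gt (etrans (esym (sc_ro tu)) (sc_mid sm)).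
  by split => //; apply: M_cover23 S2t (S3_cover S2t hu (sc_mid tu)) tu.
apply: eq_big_seq => s S1s; apply: eq_bigr => m _.
case: (sc s m k =P 0) => [->|/eqP sm]; first by rewrite !mulr0.
congr (_ * _ * _); apply: fmulE => // t u /fmul_terms_neq0 [gt hu tu] /=.
have S2t := S2_cover S1s gt (etrans (esym (sc_ro tu)) (sc_mid sm)).
by split => //; apply: S3_cover S2t hu (sc_mid tu).
Qed.

Lemma fmulA_expandr : ((f ** g) ** h) k = \sum_(m <- M) \sum_(u <- S3)
  (\sum_(s <- S1) \sum_(t <- S2) f s * g t * sc s t m) * h u * sc m u k.
Proof.
rewrite (@fmulE _ _ _ M S3) //; last first.
  move=> m u /fmul_terms_neq0 [/fsum_neq0 [[s t] /fmul_terms_neq0 [fs gt st]] hu mu] /=.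
  have S1s := S1_cover fs (etrans (esym (sc_ro st)) (esym (sc_ro mu))).
  have S2t := S2_cover S1s gt (sc_mid st).
  split; first exact: M_cover12 S1s S2t st.
  by apply: S3_cover S2t hu (etrans (sc_mid mu) (sc_co st)).
apply: eq_bigr => m _; apply: eq_bigr => u _.
case: (sc m u k =P 0) => [->|/eqP mu]; first by rewrite !mulr0.
congr (_ * _ * _); apply: fmulE => // s t /fmul_terms_neq0 [fs gt st] /=.
have S1s := S1_cover fs (etrans (esym (sc_ro st)) (esym (sc_ro mu))).
by split => //; apply: S2_cover S1s gt (sc_mid st).
Qed.

Lemma fmulA_on_covers : (f ** (g ** h)) k = ((f ** g) ** h) k.
Proof.
rewrite fmulA_expandl fmulA_expandr; apply: sum_reassoc => s t u S1s S2t S3u.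
by apply: sc_assoc => // m; [apply: M_cover12 | apply: M_cover23].
Qed.

End Associativity.

Lemma fmulA f g h : ldag ro f -> ldag ro g -> ldag ro h ->
  f ** (g ** h) = (f ** g) ** h.
Proof.
move=> f_ldag g_ldag h_ldag; apply: functional_extensionality => k.
have [S1 H1] := f_ldag (ro k).
have [S2 H2] := ldag_cover (undup S1) g_ldag.
have [S3 H3] := ldag_cover (undup S2) h_ldag.
have [M HM] := @cover_seq_union _ _
  ([seq (s, t) | s <- undup S1, t <- undup S2] ++
   [seq (t, u) | t <- undup S2, u <- undup S3])
  (fun p m => sc p.1 p.2 m != 0) (fun p _ => acoord_supp _).
apply: (@fmulA_on_covers f g h k (undup S1) (undup S2) (undup S3) (undup M));
  rewrite ?undup_uniq //.
- by move=> s fs rs; rewrite mem_undup; apply: H1.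
- by move=> s t S1s gt rt; rewrite mem_undup; apply: H2 S1s gt rt.
- by move=> t u S2t hu ru; rewrite mem_undup; apply: H3 S2t hu ru.
- move=> s t m S1s S2t st; rewrite mem_undup; apply: (HM (s, t)) st.
  by rewrite mem_cat allpairs_f.
- move=> t u m S2t S3u tu; rewrite mem_undup; apply: (HM (t, u)) tu.
  by rewrite mem_cat [X in _ || X]allpairs_f ?orbT.
Qed.

Lemma funit_neq0 j : funit a e j != 0 -> exists i, a j = e i.
Proof.
move=> /fsum_neq0 [i]; have [j' aj'] := e_in_basis i.
by rewrite -aj' acoord_basis; case: (j =P j') => [->|]; [exists i | rewrite eqxx].
Qed.

(* Over the zero ring all the a_j are 0, so the basis is injective only if 1 != 0. *)
Section NontrivialRing.
Hypothesis nontrivial_R : (1 : R) != 0.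

Lemma a_inj : injective a.
Proof.
move=> s t ast; have := congr1 (acoord^~ s) ast; rewrite !acoord_basis eqxx /=.
by case: (s =P t) => // _ /eqP; rewrite (negbTE nontrivial_R).
Qed.

Lemma a_neq0 j : a j != 0.
Proof.
apply: contra_neq nontrivial_R => aj0.
by have := congr1 (acoord^~ j) aj0; rewrite acoord_basis acoord0 eqxx.
Qed.

Lemma e_inj : injective e.
Proof.
move=> i i' eii'; apply/eqP; apply: contraT => ii'.
have [j aj] := e_in_basis i; have := a_neq0 j.
have := e_orth i i'; rewrite (negbTE ii') -eii' e_orth eqxx => ei0.
by rewrite aj ei0 eqxx.
Qed.

Lemma funit_basis j i : a j = e i -> funit a e j = 1.
Proof.
move=> aj; rewrite /funit (@fsumE _ _ _ [:: i]) /= ?big_seq1.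
  by rewrite -aj acoord_basis eqxx.
move=> i'; have [j' aj'] := e_in_basis i'; rewrite -aj' acoord_basis.
case: (j =P j') => [jj' _|_]; last by rewrite eqxx.
by rewrite (@e_inj i' i) ?mem_head // -aj' -jj' aj.
Qed.

End NontrivialRing.

Lemma ldag_funit : ldag ro (funit a e).
Proof.
have [/ring_trivial R1|nontrivial_R] := eqVneq (1 : R) 0.
  by move=> i; exists [::] => j; rewrite [funit a e j](R1 _ 0) eqxx.
move=> i; have [j0 aj0] := e_in_basis i; exists [:: j0].
move=> j /funit_neq0 [i' aj] rj.
have : a j = mul (e i) (e i') by rewrite -aj -rj ro_a.
rewrite e_orth; case: (i =P i') => [_|_].
  by rewrite -aj0 => /(a_inj nontrivial_R) ->; rewrite mem_head.
by move/eqP; rewrite (negbTE (a_neq0 _ j)).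
Qed.

Lemma fmul_funitl f : funit a e ** f = f.
Proof.
apply: functional_extensionality => k.
have [/ring_trivial R1|nontrivial_R] := eqVneq (1 : R) 0; first exact: R1.
have [j0 aj0] := e_in_basis (ro k).
rewrite /fmul (@fsumE _ _ _ [:: (j0, k)]) /= ?big_seq1.
  by rewrite /fmul_terms /= (funit_basis nontrivial_R aj0) aj0 e_mul_a eqxx
    acoord_basis eqxx mul1r mulr1.
move=> [s t] /fmul_terms_neq0 [/funit_neq0 [i as_] _] /=.
rewrite as_ e_mul_a; case: (ro t =P i) => [rt|_]; last by rewrite acoord0 eqxx.
rewrite acoord_basis; case: (k =P t) => [kt _|_]; last by rewrite eqxx.
suff -> : s = j0 by rewrite kt mem_head.
by apply: (a_inj nontrivial_R); rewrite aj0 as_ -rt kt.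
Qed.

Lemma fmul_funitr f : f ** funit a e = f.
Proof.
apply: functional_extensionality => k.
have [/ring_trivial R1|nontrivial_R] := eqVneq (1 : R) 0; first exact: R1.
have [j1 aj1] := e_in_basis (co k).
rewrite /fmul (@fsumE _ _ _ [:: (k, j1)]) /= ?big_seq1.
  by rewrite /fmul_terms /= (funit_basis nontrivial_R aj1) aj1 a_mul_e eqxx
    acoord_basis eqxx !mulr1.
move=> [s t] /fmul_terms_neq0 [_ /funit_neq0 [i at_]] /=.
rewrite at_ a_mul_e; case: (co s =P i) => [cs|_]; last by rewrite acoord0 eqxx.
rewrite acoord_basis; case: (k =P s) => [ks _|_]; last by rewrite eqxx.
suff -> : t = j1 by rewrite ks mem_head.
by apply: (a_inj nontrivial_R); rewrite aj1 at_ -cs ks.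
Qed.

Lemma ldag_completion : fmul_welldef mul a (ldag ro) /\
  assoc_unital_alg (ldag ro) (fmul mul a) (funit a e).
Proof.
split=> [f g f_ldag g_ldag|].
  by split=> [k|]; [apply: fin_supp_fmul_terms | apply: ldag_fmul].
split; first exact: ldag0.
split; first exact: ldag_lin.
split; first exact: ldag_fmul.
split; first exact: fmulA.
split; first exact: fmul_linl.
split; first exact: fmul_linr.
by split=> [|f _]; [apply: ldag_funit | rewrite fmul_funitl fmul_funitr].
Qed.

End RowFiniteCompletion.

Section OppositeAlgebra.
Variables (R : comPzRingType) (A : lmodType R) (mul : A -> A -> A)
  (J : eqType) (a : J -> A).
Local Notation mulop := (fun x y => mul y x).

Lemma nu_algebra_op : nu_algebra mul -> nu_algebra mulop.
Proof. by case=> mA linl linr; split=> // x y z; rewrite mA. Qed.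

Lemma orth_idem_op (I : eqType) (e : I -> A) : orth_idem mul e -> orth_idem mulop e.
Proof. by move=> e_orth i i'; rewrite e_orth eq_sym; case: eqP => [->|]. Qed.

Lemma fmul_terms_op (f g : J -> R) k :
  fmul_terms mul a f g k = fun p => fmul_terms mulop a g f k (p.2, p.1).
Proof.
by apply: functional_extensionality => p; rewrite /fmul_terms /= [g _ * _]mulrC.
Qed.

Lemma fmul_op (P : (J -> R) -> Prop) f g :
  fmul_welldef mulop a P -> P f -> P g -> fmul mul a f g = fmul mulop a g f.
Proof.
move=> wd Pf Pg; apply: functional_extensionality => k.
by rewrite /fmul fmul_terms_op fsum_swap //; apply: (wd g f Pg Pf).1.
Qed.

Lemma fmul_welldef_op (P : (J -> R) -> Prop) :
  fmul_welldef mulop a P -> fmul_welldef mul a P.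
Proof.
move=> wd f g Pf Pg; rewrite (fmul_op wd Pf Pg).
split=> [k|]; last by case: (wd g f Pg Pf).
by rewrite fmul_terms_op; apply/fin_supp_swap/(wd g f Pg Pf).1.
Qed.

End OppositeAlgebra.

Theorem lemma1p1 (R : comPzRingType) (A : lmodType R) (mul : A -> A -> A)
  (I J : eqType) (e : I -> A) (a : J -> A) (ro co : J -> I) :
  nu_algebra mul ->
  orth_idem mul e ->
  block_decomp mul e ->
  (forall i i', free_mod (block mul e i i')) ->
  is_basis a ->
  (forall i i', basis_on (fun j => mul (mul (e i) (a j)) (e i') != 0)
                         (fun j => mul (mul (e i) (a j)) (e i'))
                         (block mul e i i')) ->
  (forall j, exists i i' k, a j = mul (mul (e i) (a k)) (e i')) ->
  (forall i i' k, mul (mul (e i) (a k)) (e i') != 0 ->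
     exists j, a j = mul (mul (e i) (a k)) (e i')) ->
  (forall i, exists j, a j = e i) ->
  (forall j, mul (e (ro j)) (a j) = a j) ->
  (forall j, mul (a j) (e (co j)) = a j) ->
  [/\ fmul_welldef mul a (ldag ro),
      assoc_unital_alg (ldag ro) (fmul mul a) (funit a e),
      fmul_welldef mul a (rdag co),
      assoc_unital_alg (rdag co) (fmul mul a) (funit a e) &
      assoc_unital_alg (fun f => ldag ro f /\ rdag co f) (fmul mul a) (funit a e)].
Proof.
move=> mul_alg e_orth _ _ a_basis _ _ _ e_in_basis ro_a co_a.
have [wdL algL] := ldag_completion mul_alg e_orth a_basis e_in_basis ro_a co_a.
have [wdR' algR'] : fmul_welldef (fun x y => mul y x) a (rdag co) /\
    assoc_unital_alg (rdag co) (fmul (fun x y => mul y x) a) (funit a e).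
  exact: ldag_completion (nu_algebra_op mul_alg) (orth_idem_op e_orth)
    a_basis e_in_basis co_a ro_a.
have algR : assoc_unital_alg (rdag co) (fmul mul a) (funit a e).
  by apply: assoc_unital_alg_op algR' => f g; apply: fmul_op.
split=> //; first exact: fmul_welldef_op.
exact: assoc_unital_alg_meet.
Qed.
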